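(* Let $q,r,\nu$ be positive integers. The subspace of vectors $x\in\mathbb{C}^{\nu r}$ (not depending on $z$) with $\mathcal{M}^0(z)x=0$ for all $z$, i.e. $\bigcap_z\ker\mathcal{M}^0(z)$, has dimension $(\nu-q)^+r$. This subspace equals the kernel of $\mathcal{M}(z)$ for $\mu=r$, which is the same for all $z$.
   Context: Matrix indices start at $0$. $u(z)=(1,\dots,z^{q-1})^\top$, $w(z)=(1,\dots,z^{r-1})$, $M(z)=u(z)w(z)$. $\mathcal{M}^0(z)=(M(z),M'(z),\dots,M^{(\nu-1)}(z))\in\mathbb{C}^{q\times\nu r}$, and, for a positive integer $\mu$, $\mathcal{M}(z)\in\mathbb{C}^{\mu q\times\nu r}$ is the block matrix with $(i,j)$ block $M^{(i+j)}(z)$, $i=0,\dots,\mu-1$, $j=0,\dots,\nu-1$. *)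

From mathcomp Require Import all_boot all_order all_algebra.
From mathcomp Require Import all_classical all_reals.
From mathcomp.real_closed Require Import complex.
Set Implicit Arguments. Unset Strict Implicit. Unset Printing Implicit Defensive.
Import Order.TTheory GRing.Theory Num.Theory.
Local Open Scope ring_scope.

Definition Cplx (R : realType) : fieldType := R[i].

Section Defs.
Variables (F : fieldType) (q r nu : nat).

(* entry (a,c) of the k-th derivative M^(k)(z) of M(z) = u(z) w(z), whose
   (a,c) entry is z^(a+c); derivative taken via the formal derivative *)
Definition mder (k a c : nat) (z : F) : F := (('X^(a + c) : {poly F})^`(k)).[z].
Definition Mder (k : nat) (z : F) : 'M[F]_(q, r) :=
  \matrix_(a < q, c < r) mder k a c z.

(* M^0(z) = (M(z), M'(z), ..., M^(nu-1)(z)) in F^{q x nu r};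
   column index j*r + c  <->  block j, column c *)
Definition Mcal0 (z : F) : 'M[F]_(q, nu * r) :=
  \matrix_(a < q, col < nu * r) mder (col %/ r) a (col %% r) z.

(* Mcal(z) in F^{mu q x nu r}: block (i,j) is M^(i+j)(z);
   row index i*q + a, column index j*r + c *)
Definition Mcal (mu : nat) (z : F) : 'M[F]_(mu * q, nu * r) :=
  \matrix_(row < mu * q, col < nu * r)
     mder (row %/ q + col %/ r) (row %% q) (col %% r) z.
End Defs.

From mathcomp Require Import all_boot all_order all_algebra.
From mathcomp Require Import all_classical all_reals.
From mathcomp.real_closed Require Import complex.
Import Order.TTheory GRing.Theory Num.Theory.
Local Open Scope ring_scope.
Set Implicit Arguments. Unset Strict Implicit.

(* Cut x into nu blocks of length r and let g_j be the polynomial of degree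
   < r whose coefficients form the j-th block. The a-th entry of M^0(z) x is
   p_a(z) with p_a = \sum_j (X^a g_j)^(j) ([derivsum]), and the entries of
   Mcal(z) x are the derivatives p_a^(i)(z), i < mu. By Leibniz' rule
     p_a = \sum_m a^_m X^(a-m) h_m,   h_m = \sum_j C(j,m) g_j^(j-m) ([ffcoef]),
   and each h_m has degree < r. In characteristic 0, "p_a = 0 for a < q"
   (i.e. M^0(z) x = 0 for all z) and "p_a^(i)(z) = 0 for a < q, i < r" (by
   Taylor at z and induction on a, since p_a = a! h_a once h_0..h_(a-1)
   vanish) are therefore both equivalent to h_0 = ... = h_(q-1) = 0, which
   does not depend on z. As h_j is g_j plus a combination of the g_k with
   k > j, the blocks g_q, ..., g_(nu-1) determine x in this kernel, so its
   dimension is at most (nu-q)r; it is at least nu r - rq since Mcal(z) has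
   rq rows. *)

Section DerivnMul.
Variable R : nzSemiRingType.
Implicit Types p q : {poly R}.

Lemma derivnM p q n :
  (p * q)^`(n) = \sum_(i < n.+1) 'C(n, i)%:R *: (p^`(i) * q^`(n - i)).
Proof.
elim: n => [|n IHn]; first by rewrite big_ord1 !derivn0 bin0 scale1r.
rewrite derivnS IHn raddf_sum /=.
under eq_bigr => i _ do rewrite derivZ derivM -!derivnS scalerDr.
rewrite big_split /= [in RHS]big_ord_recl bin0 scale1r subn0.
under [in RHS]eq_bigr => i _ do rewrite /bump /= binS natrD scalerDl.
rewrite big_split /= addrA addrC; congr (_ + _).
rewrite big_ord_recl bin0 scale1r subn0 -derivnS [in RHS]big_ord_recr /=.
rewrite bin_small // scale0r addr0; congr (_ + _).
by apply: eq_bigr => i _; rewrite /bump /= -!derivnS subSS add1n -subSn.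
Qed.

Lemma derivnXnM p a n N : (n < N)%N ->
  ('X^a * p)^`(n) =
    \sum_(i < N) ('C(n, i) * a ^_ i)%:R *: ('X^(a - i) * p^`(n - i)).
Proof.
move=> ltnN; rewrite derivnM (big_ord_widen N
  (fun i => 'C(n, i)%:R *: (('X^a)^`(i) * p^`(n - i)))) // big_mkcond /=.
apply: eq_bigr => i _; case: ltnP => [_|/bin_small->]; last first.
  by rewrite mul0n scale0r.
by rewrite derivnXn mulrnAl -scaler_nat scalerA natrM.
Qed.

Lemma derivn_derivn p m n : p^`(m)^`(n) = p^`(n + m).
Proof. by rewrite /derivn iterD. Qed.

Lemma size_derivn p n : (size p^`(n) <= size p)%N.
Proof.
apply/leq_sizeP => i le_p_i; rewrite coef_derivn nth_default ?mul0rn //.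
exact: leq_trans le_p_i (leq_addl _ _).
Qed.

End DerivnMul.

Section Pchar0.
Variable F : fieldType.
Hypothesis F_pchar0 : [pchar F] =i pred0.
Implicit Type p : {poly F}.

Lemma pchar0_natr_eq0 n : (n%:R == 0 :> F) = (n == 0)%N.
Proof. exact: (pcharf0P F).1 F_pchar0 n. Qed.

Lemma pchar0_natr_inj : injective (fun n : nat => n%:R : F).
Proof.
suff le_inj m n : (m <= n)%N -> m%:R = n%:R :> F -> m = n.
  move=> m n /= eq_mn; case/orP: (leq_total m n) => /le_inj; first exact.
  by move/(_ (esym eq_mn)).
move=> le_mn eq_mn; apply/eqP; rewrite eqn_leq le_mn -subn_eq0 /=.
by rewrite -pchar0_natr_eq0 natrB // eq_mn subrr.
Qed.

Lemma pchar0_horner_eq0 p : (forall z, p.[z] = 0) -> p = 0.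
Proof.
move=> p0; apply: (@roots_geq_poly_eq0 _ p [seq i%:R | i <- iota 0 (size p)]).
- by apply/allP => _ /mapP[i _ ->]; apply/rootP.
- by rewrite map_inj_uniq ?iota_uniq //; apply: pchar0_natr_inj.
- by rewrite size_map size_iota.
Qed.

Lemma pchar0_derivn_horner_eq0 p z n : (size p <= n)%N ->
  (forall i, (i < n)%N -> p^`(i).[z] = 0) -> p = 0.
Proof.
move=> le_p_n p0; apply: pchar0_horner_eq0 => y.
have -> : y = z + (y - z) by rewrite addrC subrK.
rewrite (nderiv_taylor_wide (mulrC _ _) le_p_n) big1 // => i _.
have /eqP := p0 i (ltn_ord i).
rewrite nderivn_def hornerMn -mulr_natr mulf_eq0.
by rewrite pchar0_natr_eq0 gtn_eqF ?fact_gt0 // orbF => /eqP->; rewrite mul0r.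
Qed.

End Pchar0.

Section DerivSum.
Variables (F : fieldType) (nu : nat) (g : nat -> {poly F}).

Definition derivsum a : {poly F} := \sum_(j < nu) ('X^a * g j)^`(j).

Definition ffcoef m : {poly F} := \sum_(j < nu) 'C(j, m)%:R *: (g j)^`(j - m).

Lemma derivsum_ffcoef a N : (nu <= N)%N ->
  derivsum a = \sum_(m < N) (a ^_ m)%:R *: ('X^(a - m) * ffcoef m).
Proof.
move=> le_nu_N; rewrite /derivsum.
under eq_bigr => j _ do rewrite (derivnXnM _ _ (leq_trans (ltn_ord j) le_nu_N)).
rewrite exchange_big /=; apply: eq_bigr => m _.
rewrite mulr_sumr scaler_sumr; apply: eq_bigr => j _.
by rewrite -scalerAr scalerA natrM mulrC.
Qed.

Lemma derivsum_eq0 q : (forall m, (m < q)%N -> ffcoef m = 0) ->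
  forall a, (a < q)%N -> derivsum a = 0.
Proof.
move=> coef0 a lt_a_q; rewrite (@derivsum_ffcoef a (nu + q)) ?leq_addr //.
apply: big1 => m _; have [lt_m_q|le_q_m] := ltnP m q.
  by rewrite coef0 // mulr0 scaler0.
by rewrite ffact_small ?scale0r // (leq_trans lt_a_q le_q_m).
Qed.

Lemma derivsum_ffact m : (forall k, (k < m)%N -> ffcoef k = 0) ->
  derivsum m = m`!%:R *: ffcoef m.
Proof.
move=> coef0; have lt_m_N : (m < nu + m.+1)%N by rewrite addnS ltnS leq_addl.
rewrite (@derivsum_ffcoef m (nu + m.+1)) ?leq_addr //.
rewrite (bigD1 (Ordinal lt_m_N)) //= subnn expr0 mul1r ffactnn big1 ?addr0 //.
move=> k neq_km; have [lt_km|lt_mk|eq_km] := ltngtP k m.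
- by rewrite coef0 // mulr0 scaler0.
- by rewrite ffact_small ?scale0r.
- by move: neq_km; rewrite -val_eqE /= eq_km eqxx.
Qed.

Section BoundedSize.
Variable r : nat.
Hypothesis size_g : forall j, (size (g j) <= r)%N.

Lemma size_ffcoef m : (size (ffcoef m) <= r)%N.
Proof.
apply: (big_ind (fun p : {poly F} => size p <= r)%N); rewrite ?size_poly0 //.
  move=> p p' le_p le_p'.
  by rewrite (leq_trans (size_polyD _ _)) // geq_max le_p.
move=> j _; rewrite (leq_trans (size_scale_leq _ _)) //.
exact: leq_trans (size_derivn _ _) (size_g j).
Qed.

Hypothesis F_pchar0 : [pchar F] =i pred0.

Lemma ffcoef_eq0 q z :
  (forall a i, (a < q)%N -> (i < r)%N -> (derivsum a)^`(i).[z] = 0) ->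
  forall m, (m < q)%N -> ffcoef m = 0.
Proof.
move=> d0 m; elim/ltn_ind: m => m IHm lt_m_q.
have sum_m := derivsum_ffact
  (fun k lt_km => IHm k lt_km (ltn_trans lt_km lt_m_q)).
have : derivsum m = 0.
  apply: (pchar0_derivn_horner_eq0 F_pchar0 (z := z) (n := r)) => [|i lt_i_r].
    by rewrite sum_m (leq_trans (size_scale_leq _ _)) ?size_ffcoef.
  exact: d0.
move/eqP; rewrite sum_m scaler_eq0 pchar0_natr_eq0 // gtn_eqF ?fact_gt0 //=.
by move/eqP.
Qed.

End BoundedSize.

Lemma ffcoef_eq0_g_eq0 q : (forall m, (m < q)%N -> ffcoef m = 0) ->
    (forall j, (q <= j < nu)%N -> g j = 0) ->
  forall j, (j < nu)%N -> g j = 0.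
Proof.
move=> coef0 g0; suff gd0 d j : (j < nu <= j + d)%N -> g j = 0.
  by move=> j lt_j_nu; apply: (gd0 nu); rewrite lt_j_nu leq_addl.
elim: d j => [|d IHd] j /andP[lt_j_nu]; first by rewrite addn0 leqNgt lt_j_nu.
rewrite addnS => le_nu_jd; have [le_q_j|lt_j_q] := leqP q j.
  by apply: g0; rewrite le_q_j.
have := coef0 j lt_j_q; rewrite /ffcoef (bigD1 (Ordinal lt_j_nu)) //=.
rewrite subnn derivn0 binn scale1r big1 ?addr0 // => k neq_kj.
have [lt_kj|lt_jk|eq_kj] := ltngtP k j; first by rewrite bin_small ?scale0r.
  rewrite IHd ?linear0 ?scaler0 // ltn_ord (leq_trans le_nu_jd) //.
  by rewrite -addSn leq_add2r.
by move: neq_kj; rewrite -val_eqE /= eq_kj eqxx.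
Qed.

End DerivSum.

Lemma horner_derivn_XnM (F : fieldType) r (f : {poly F}) a k z :
  (size f <= r)%N -> (('X^a * f)^`(k)).[z] = \sum_(c < r) mder k a c z * f`_c.
Proof.
move=> le_f_r; have {1}-> : f = \poly_(c < r) f`_c.
  apply/polyP => c; rewrite coef_poly; case: ltnP => // /(leq_trans le_f_r).
  by move/leq_sizeP/(_ c (leqnn c)).
rewrite poly_def mulr_sumr raddf_sum horner_sum; apply: eq_bigr => c _.
by rewrite -scalerAr -exprD /= derivnZ hornerZ mulrC.
Qed.

Lemma sub_kermx_trP (F : fieldType) m n (A : 'M[F]_(m, n)) (x : 'rV_n) :
  reflect (A *m x^T = 0) (x <= kermx A^T)%MS.
Proof.
apply: (iffP sub_kermxP) => /eqP; rewrite -trmx_eq0 trmx_mul trmxK => /eqP //.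
Qed.

Section Blocks.
Variables (F : fieldType) (q r nu : nat).
Hypothesis r_gt0 : (0 < r)%N.

Definition block_poly (x : 'rV[F]_(nu * r)) j : {poly F} :=
  \poly_(c < r) (rVpoly x)`_(j * r + c).

Lemma size_block_poly x j : (size (block_poly x j) <= r)%N.
Proof. exact: size_poly. Qed.

Lemma sum_block_poly (f : nat -> nat -> F) (x : 'rV[F]_(nu * r)) :
  \sum_(k < nu * r) f (k %/ r)%N (k %% r)%N * x 0 k =
  \sum_(j < nu) \sum_(c < r) f j c * (block_poly x j)`_c.
Proof.
under eq_bigr => k _ do rewrite -coef_rVpoly_ord.
rewrite -(big_mkord xpredT (fun k => f (k %/ r)%N (k %% r)%N * (rVpoly x)`_k)).
rewrite big_nat_mul big_mkord.
apply: eq_bigr => j _; rewrite -{1}[(j * r)%N]add0n big_addn mulSn addnK.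
rewrite big_mkord; apply: eq_bigr => c _.
rewrite [(block_poly x j)`_c]coef_poly ltn_ord addnC.
by rewrite divnMDl // modnMDl divn_small // modn_small // addn0.
Qed.

Lemma block_poly_eq0 x : (forall j, (j < nu)%N -> block_poly x j = 0) -> x = 0.
Proof.
move=> x0; apply/rowP => k; rewrite mxE -coef_rVpoly_ord (divn_eq k r).
have lt_kr_nu : (k %/ r < nu)%N by rewrite ltn_divLR.
have /polyP/(_ (k %% r)%N) := x0 _ lt_kr_nu.
by rewrite coef_poly ltn_pmod // coef0.
Qed.

Lemma horner_derivn_derivsum x i a z :
  ((derivsum nu (block_poly x) a)^`(i)).[z] =
  \sum_(k < nu * r) mder (i + k %/ r) a (k %% r) z * x 0 k.
Proof.
rewrite (sum_block_poly (fun j c => mder (i + j) a c z)) raddf_sum horner_sum.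
apply: eq_bigr => j _.
by rewrite /= derivn_derivn (horner_derivn_XnM _ _ _ (size_block_poly _ _)).
Qed.

Lemma Mcal_mulmx_entry mu z x (i : 'I_(mu * q)) :
  (Mcal q r nu mu z *m x^T) i 0 =
  ((derivsum nu (block_poly x) (i %% q))^`(i %/ q)).[z].
Proof.
by rewrite horner_derivn_derivsum mxE; apply: eq_bigr => k _; rewrite !mxE.
Qed.

Lemma Mcal0_mulmx_entry z x (a : 'I_q) :
  (Mcal0 q r nu z *m x^T) a 0 = (derivsum nu (block_poly x) a).[z].
Proof.
rewrite -[derivsum _ _ _]derivn0 horner_derivn_derivsum mxE.
by apply: eq_bigr => k _; rewrite !mxE.
Qed.

Hypothesis F_pchar0 : [pchar F] =i pred0.

Lemma Mcal0_mulmx_eq0P x :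
  (forall z, Mcal0 q r nu z *m x^T = 0) <->
  (forall m, (m < q)%N -> ffcoef nu (block_poly x) m = 0).
Proof.
split=> [Mx0|coef0 z]; last first.
  apply/colP => a.
  by rewrite Mcal0_mulmx_entry mxE (derivsum_eq0 coef0) ?horner0.
apply: (ffcoef_eq0 (size_block_poly x) F_pchar0 (z := 0)) => a i lt_a_q _.
suff -> : derivsum nu (block_poly x) a = 0 by rewrite linear0 horner0.
apply: pchar0_horner_eq0 => // z.
by rewrite -(Mcal0_mulmx_entry z x (Ordinal lt_a_q)) Mx0 mxE.
Qed.

Lemma Mcal_mulmx_eq0P mu z x : (r <= mu)%N ->
  (Mcal q r nu mu z *m x^T = 0) <->
  (forall m, (m < q)%N -> ffcoef nu (block_poly x) m = 0).
Proof.
move=> le_r_mu; split=> [Mx0|coef0]; last first.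
  apply/colP => i.
  rewrite Mcal_mulmx_entry mxE (derivsum_eq0 coef0) ?ltn_pmod //.
    by rewrite linear0 horner0.
  have : (0 < mu * q)%N := leq_ltn_trans (leq0n i) (ltn_ord i).
  by rewrite muln_gt0 => /andP[].
apply: (ffcoef_eq0 (size_block_poly x) F_pchar0 (z := z)) => a i lt_a_q lt_i_r.
have lt_iqa : (i * q + a < mu * q)%N.
  apply: (@leq_trans (i.+1 * q)).
    by rewrite mulSn [(q + _)%N]addnC ltn_add2l.
  by rewrite leq_mul2r (leq_trans lt_i_r le_r_mu) orbT.
have := Mcal_mulmx_entry z x (Ordinal lt_iqa); rewrite Mx0 mxE /=.
rewrite modnMDl modn_small // divnMDl ?divn_small ?addn0 //.
exact: leq_ltn_trans lt_a_q.
Qed.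

End Blocks.

Section KernelRank.
Variables (F : fieldType) (q r nu : nat).
Hypotheses (r_gt0 : (0 < r)%N) (F_pchar0 : [pchar F] =i pred0).

Fact tail_ord_subproof (k : 'I_((nu - q) * r)) : (q * r + k < nu * r)%N.
Proof.
case: k => k /=; have [le_q_nu|/ltnW] := leqP q nu.
  by rewrite -{2}(subnKC le_q_nu) mulnDl ltn_add2l.
by rewrite -subn_eq0 => /eqP->.
Qed.

Definition tail_ord k := Ordinal (tail_ord_subproof k).

Definition tail_mx : 'M[F]_(nu * r, (nu - q) * r) := colsub tail_ord 1%:M.

Lemma tail_mx_eq0 (x : 'rV[F]_(nu * r)) : x *m tail_mx = 0 ->
  forall j, (q <= j < nu)%N -> block_poly x j = 0.
Proof.
rewrite /tail_mx mulmx_colsub mulmx1 => x0 j /andP[le_q_j lt_j_nu].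
apply/polyP => c; rewrite coef_poly coef0; case: ltnP => // lt_c_r.
have lt_k : ((j - q) * r + c < (nu - q) * r)%N.
  apply: (@leq_trans ((j - q).+1 * r)).
    by rewrite mulSn [(r + _)%N]addnC ltn_add2l.
  by rewrite leq_mul2r -subSn // leq_sub2r ?orbT.
have /rowP/(_ (Ordinal lt_k)) := x0; rewrite !mxE -coef_rVpoly_ord /=.
by rewrite addnA -mulnDl subnKC.
Qed.

Lemma sub_kermx_McalP mu z (x : 'rV[F]_(nu * r)) : (r <= mu)%N ->
  (x <= kermx (Mcal q r nu mu z)^T)%MS <->
  (forall m, (m < q)%N -> ffcoef nu (block_poly x) m = 0).
Proof.
move=> le_r_mu; rewrite -(Mcal_mulmx_eq0P _ r_gt0 F_pchar0 _ _ le_r_mu).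
exact: (iff_sym (rwP (sub_kermx_trP _ _))).
Qed.

Lemma kermx_Mcal_eq (z z' : F) :
  (kermx (Mcal q r nu r z)^T == kermx (Mcal q r nu r z')^T)%MS.
Proof.
by apply/andP; split; apply/rV_subP => x /sub_kermx_McalP-/(_ (leqnn r)) x0;
  apply/sub_kermx_McalP.
Qed.

Lemma mxrank_kermx_Mcal (z : F) :
  \rank (kermx (Mcal q r nu r z)^T) = ((nu - q) * r)%N.
Proof.
set K := kermx _; apply/eqP; rewrite eqn_leq; apply/andP; split.
  suff /mxrank_injP <- : (K :&: kermx tail_mx)%MS == 0.
    exact: rank_leq_col.
  rewrite -submx0; apply/rV_subP => x; rewrite sub_capmx submx0.
  case/andP=> /sub_kermx_McalP-/(_ (leqnn r)) x0 /sub_kermxP/tail_mx_eq0 tail0.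
  by apply/eqP/block_poly_eq0 => //; apply: ffcoef_eq0_g_eq0 x0 tail0.
by rewrite mxrank_ker mulnBl [(q * r)%N]mulnC leq_sub2l ?rank_leq_col.
Qed.

End KernelRank.

Unset Implicit Arguments.

Theorem lemma7p3 (R : realType) (q r nu : nat) :
  (0 < q)%N -> (0 < r)%N -> (0 < nu)%N ->
  exists K : 'M[Cplx R]_(nu * r),
    [/\ forall x : 'rV[Cplx R]_(nu * r),
          (x <= K)%MS <-> (forall z : Cplx R, Mcal0 q r nu z *m x^T = 0),
        \rank K = ((nu - q) * r)%N
      & forall z : Cplx R, (K == kermx (Mcal q r nu r z)^T)%MS].
Proof.
move=> _ r_gt0 _; have F_pchar0 : [pchar (Cplx R)] =i pred0 := @pchar_num R[i].
exists (kermx (Mcal q r nu r 0)^T); split.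
- by move=> x; rewrite Mcal0_mulmx_eq0P // sub_kermx_McalP.
- exact: mxrank_kermx_Mcal.
- by move=> z; apply: kermx_Mcal_eq.
Qed.
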